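(* Let $f:\mathbb{R}\to\mathbb{R}\cup\{\pm\infty\}$ be a proper concave function such that $f(\delta)\le0$ and $\partial f(\delta)\cap\mathbb{R}_{<0}\ne\emptyset$ for some $\delta\in\operatorname{dom}(f)$, and such that $f$ has a root or attains its maximum; let $\delta^*:=\max(\{\delta:f(\delta)=0\}\cup\operatorname{argmax}f)$. Run the (standard) Newton–Dinkelbach method described in the context. Then for every iteration $i\ge2$: $\delta^*\le\delta^{(i)}<\delta^{(i-1)}$, $f(\delta^* )\ge f(\delta^{(i)})>f(\delta^{(i-1)})$, and $g^{(i)}\ge g^{(i-1)}$, where the last inequality holds with equality if and only if $g^{(i)}=\inf_{g\in\partial f(\delta^{(i)})}g$, $g^{(i-1)}=\sup_{g\in\partial f(\delta^{(i-1)})}g$ and $f(\delta^{(i)})=0$. Moreover, \[ \frac{f(\delta^{(i)})}{f(\delta^{(i-1)})}+\frac{g^{(i)}}{g^{(i-1)}}\le1. \]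
   Context: $\operatorname{dom}(f):=\{x:-\infty<f(x)<\infty\}$; $\partial f(x_0):=\{g: f(x)\le f(x_0)+g(x-x_0)\ \forall x\in\mathbb{R}\}$. Newton–Dinkelbach method: given oracles returning $f(\delta)$ and some $g\in\partial f(\delta)$, input $\delta^{(1)}\in\operatorname{dom}(f)$, $g^{(1)}\in\partial f(\delta^{(1)})$ with $f(\delta^{(1)})\le0$, $g^{(1)}<0$. At iteration $i\ge1$: if $f(\delta^{(i)})=0$ return $\delta^{(i)}$; otherwise let $\delta:=\delta^{(i)}-f(\delta^{(i)})/g^{(i)}$ and $g\in\partial f(\delta)$ from the oracle; if $f(\delta)=-\infty$, or $f(\delta)<0$ and $g\ge0$, stop and report no root; otherwise set $\delta^{(i+1)}:=\delta$, $g^{(i+1)}:=g$. ''Iteration $i$'' refers to an iteration at whose start $\delta^{(i)},g^{(i)}$ are defined. *)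

From HB Require Import structures.
From mathcomp Require Import all_boot all_order all_algebra.
From mathcomp Require Import boolp classical_sets reals constructive_ereal ereal.
Set Implicit Arguments. Unset Strict Implicit. Unset Printing Implicit Defensive.
Import Order.TTheory GRing.Theory Num.Theory.
Local Open Scope classical_set_scope.
Local Open Scope ring_scope.

Section Defs.
Variable R : realType.

Definition edom (f : R -> \bar R) : set R := [set x | f x \is a fin_num].

Definition eproper (f : R -> \bar R) : Prop :=
  (forall x, f x <> +oo%E) /\ (exists x, f x \is a fin_num).

(* concave (hypograph convex); for a function never +oo this is the
   usual concavity inequality between points of the domain *)
Definition econcave (f : R -> \bar R) : Prop :=
  forall x y t, x \in edom f -> y \in edom f -> 0 <= t <= 1 ->
    (((t * fine (f x) + (1 - t) * fine (f y))%R)%:E <= f (t * x + (1 - t) * y)%R)%E.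

(* superdifferential: {g | f x <= f x0 + g (x - x0) for all x} *)
Definition esubdiff (f : R -> \bar R) (x0 : R) : set R :=
  [set g | forall x, (f x <= f x0 + ((g * (x - x0))%R)%:E)%E].

Definition eargmax (f : R -> \bar R) : set R :=
  [set x | forall y, (f y <= f x)%E].

Definition rootargmax (f : R -> \bar R) : set R :=
  [set x | f x = 0%E] `|` eargmax f.

Definition ND_init (f : R -> \bar R) (delta g : nat -> R) : Prop :=
  delta 1%N \in edom f /\ g 1%N \in esubdiff f (delta 1%N) /\
  (f (delta 1%N) <= 0)%E /\ g 1%N < 0.

(* ND_run f delta g n : the Newton--Dinkelbach method, run from
   (delta 1, g 1) with oracle answers g (j+1) in the superdifferential at
   delta (j+1), reaches iteration n, i.e. delta^(1..n), g^(1..n) are all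
   defined: for every j in [1, n), iteration j neither returned nor stopped. *)
Definition ND_run (f : R -> \bar R) (delta g : nat -> R) (n : nat) : Prop :=
  ND_init f delta g /\
  forall j : nat, (1 <= j)%N -> (j < n)%N ->
    [/\ f (delta j) <> 0%E,
        delta j.+1 = delta j - fine (f (delta j)) / g j,
        g j.+1 \in esubdiff f (delta j.+1),
        f (delta j.+1) <> -oo%E &
        ~ ((f (delta j.+1) < 0)%E /\ 0 <= g j.+1)].

End Defs.

From HB Require Import structures.
From mathcomp Require Import all_boot all_order all_algebra.
From mathcomp Require Import boolp classical_sets reals constructive_ereal ereal.
From mathcomp Require Import ring lra.
Set Implicit Arguments. Unset Strict Implicit. Unset Printing Implicit Defensive.
Import Order.TTheory GRing.Theory Num.Theory.
Local Open Scope classical_set_scope.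
Local Open Scope ring_scope.

(* The new iterate [a = b - f b / g_b] is the zero of the tangent of slope [g_b]
   at [b], so [f a <= 0] and [a < b]; supergradients are antitone, so
   [g_b <= g_a].  The tangent at [a] evaluated at [b] gives
   [f b <= f a + g_a (b - a)], which is the ratio bound after division by
   [f b = g_b (b - a) < 0].  A root or maximiser [x > a] would lie where the
   tangent at [b] is negative, so [f x < 0] and then [f x <= f a + g_a (x - a) < f a].
   Equality [g_a = g_b] forces [f a = 0], and conversely [f a = 0] makes [g_b]
   a supergradient at [a]. *)

Lemma ereal_inf_EFin_attained (R : realType) (A : set R) (x : R) :
  A x -> (forall s, A s -> x <= s) -> ereal_inf [set s%:E | s in A] = x%:E.
Proof.
move=> Ax xlb; apply/eqP; rewrite eq_le; apply/andP; split.
  by apply: ereal_inf_lbound; exists x.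
by apply: le_ereal_inf_tmp => _ [s As <-]; rewrite lee_fin xlb.
Qed.

Lemma ereal_sup_EFin_attained (R : realType) (A : set R) (x : R) :
  A x -> (forall s, A s -> s <= x) -> ereal_sup [set s%:E | s in A] = x%:E.
Proof.
move=> Ax xub; apply/eqP; rewrite eq_le; apply/andP; split; last first.
  by apply: ereal_sup_ubound; exists x.
by apply: ge_ereal_sup => _ [s As <-]; rewrite lee_fin xub.
Qed.

Section NewtonDinkelbach.
Variables (R : realType) (f : R -> \bar R).

Lemma edom_fineK x : x \in edom f -> f x = (fine (f x))%:E.
Proof. by move=> /set_mem /= /fineK. Qed.

Lemma edom_fine_lt0 x :
  x \in edom f -> (f x <= 0)%E -> f x <> 0%E -> fine (f x) < 0.
Proof.
move=> /edom_fineK fx fx_le0 fx_neq0.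
rewrite lt_neqAle -lee_fin -fx fx_le0 andbT.
by apply: contra_notN fx_neq0 => /eqP Fx0; rewrite fx Fx0.
Qed.

Lemma esubdiff_le x0 F s y :
  s \in esubdiff f x0 -> f x0 = F%:E -> (f y <= (F + s * (y - x0))%:E)%E.
Proof. by move=> /set_mem /(_ y) /= + fx0; rewrite fx0 EFinD. Qed.

Lemma esubdiff_le_fin x0 F s y G :
  s \in esubdiff f x0 -> f x0 = F%:E -> f y = G%:E -> G <= F + s * (y - x0).
Proof. by move=> s_sub fx0 fy; have := esubdiff_le y s_sub fx0; rewrite fy lee_fin. Qed.

Lemma esubdiff_antitone a b Fa Fb s t : a < b -> f a = Fa%:E -> f b = Fb%:E ->
  s \in esubdiff f a -> t \in esubdiff f b -> t <= s.
Proof.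
move=> ab fa fb s_sub t_sub.
have := esubdiff_le_fin s_sub fa fb; have := esubdiff_le_fin t_sub fb fa.
have : 0 < b - a by rewrite subr_gt0.
nra.
Qed.

Section NewtonStep.
(* All lemmas take every section hypothesis, so that they share one argument list. *)
#[local] Set Default Proof Using "All".
Variables (a b Fb gb : R).
Hypotheses (fb : f b = Fb%:E) (gb_sub : gb \in esubdiff f b).
Hypotheses (Fb_lt0 : Fb < 0) (gb_lt0 : gb < 0) (a_def : a = b - Fb / gb).

Lemma newton_tangent : gb * (b - a) = Fb.
Proof. by rewrite a_def; field; rewrite lt_eqF. Qed.

Lemma newton_step_lt : a < b.
Proof.
rewrite -subr_gt0 ltNge; apply/negP => ba_le0.
by have := mulr_le0 (ltW gb_lt0) ba_le0; rewrite newton_tangent leNgt Fb_lt0.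
Qed.

Lemma newton_step_le0 : (f a <= 0)%E.
Proof.
have := esubdiff_le a gb_sub fb.
by have -> : Fb + gb * (a - b) = 0 by rewrite -newton_tangent; ring.
Qed.

Variables (Fa ga : R).
Hypotheses (fa : f a = Fa%:E) (ga_sub : ga \in esubdiff f a).
Hypothesis (ga_lt0 : Fa != 0 -> ga < 0).

Let Fa_le0 : Fa <= 0.
Proof. by rewrite -lee_fin -fa newton_step_le0. Qed.

Let value_bound : Fb <= Fa + ga * (b - a).
Proof. exact: esubdiff_le_fin ga_sub fa fb. Qed.

Lemma newton_slope_le : gb <= ga.
Proof. exact: esubdiff_antitone newton_step_lt fa fb ga_sub gb_sub. Qed.

Lemma newton_value_lt : Fb < Fa.
Proof.
have [->|/ga_lt0 ga_neg] := eqVneq Fa 0; first exact: Fb_lt0.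
have := newton_step_lt; have := value_bound; nra.
Qed.

Lemma newton_ratio_le1 : Fa / Fb + ga / gb <= 1.
Proof.
have -> : Fa / Fb + ga / gb = (Fa + ga * (b - a)) / Fb.
  by rewrite -newton_tangent; field; rewrite subr_eq0 gt_eqF ?newton_step_lt ?lt_eqF.
by rewrite ler_ndivrMr // mul1r.
Qed.

Lemma rootargmax_le_newton x : x \in rootargmax f -> x <= a.
Proof.
move=> /set_mem x_in; rewrite leNgt; apply/negP => ax.
have fx_b := esubdiff_le x gb_sub fb.
have tangent_neg : Fb + gb * (x - b) < 0.
  have -> : Fb + gb * (x - b) = gb * (x - a) by rewrite -newton_tangent; ring.
  by rewrite nmulr_rlt0 // subr_gt0.
case: x_in => [fx0 | x_max].
  by move: fx_b; rewrite fx0 lee_fin; lra.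
have := le_trans (x_max a) fx_b; rewrite fa lee_fin => Fa_lt.
have [Fa0|/ga_lt0 ga_neg] := eqVneq Fa 0; first by lra.
have := le_trans (x_max a) (esubdiff_le x ga_sub fa); rewrite fa lee_fin.
nra.
Qed.

Lemma newton_slope_eq : ga = gb <->
  [/\ ereal_inf [set s%:E | s in esubdiff f a] = ga%:E,
      ereal_sup [set s%:E | s in esubdiff f b] = gb%:E & f a = 0%E].
Proof.
have ab := newton_step_lt.
split=> [ga_gb | [inf_ga _ fa0]].
  split.
  - apply: ereal_inf_EFin_attained; first exact: set_mem.
    by move=> s /mem_set s_sub; rewrite ga_gb (esubdiff_antitone ab fa fb).
  - apply: ereal_sup_EFin_attained; first exact: set_mem.
    by move=> t /mem_set t_sub; rewrite -ga_gb (esubdiff_antitone ab fa fb).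
  - rewrite fa; congr (_%:E).
    by have := Fa_le0; have := value_bound; rewrite ga_gb newton_tangent; lra.
have gb_sub_a : esubdiff f a gb.
  move=> y /=; rewrite fa0 add0e.
  have -> : gb * (y - a) = Fb + gb * (y - b) by rewrite -newton_tangent; ring.
  exact: esubdiff_le.
have : (ereal_inf [set s%:E | s in esubdiff f a] <= gb%:E)%E.
  by apply: ereal_inf_lbound; exists gb.
rewrite inf_ga lee_fin => ga_le.
by apply/eqP; rewrite eq_le ga_le newton_slope_le.
Qed.

End NewtonStep.

Lemma ND_run_inv delta g n j : ND_run f delta g n -> (1 <= j <= n)%N ->
  [/\ delta j \in edom f, g j \in esubdiff f (delta j), (f (delta j) <= 0)%E &
      (f (delta j) <> 0%E -> g j < 0)].
Proof.
move=> [[d1 [g1_sub [f1 g1]]] run]; elim: j => [//|[_ _|j IH /andP[_ jn]]].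
  by split.
have [dj gj_sub fj_le0 gj_lt0] := IH (ltnW jn).
have [fj_neq0 step gj1_sub fj1_ninf no_stop] := run j.+1 isT jn.
have fj := edom_fineK dj.
have Fj_lt0 := edom_fine_lt0 dj fj_le0 fj_neq0.
have fj1_le0 := newton_step_le0 fj gj_sub Fj_lt0 (gj_lt0 fj_neq0) step.
split=> //.
- by apply/mem_set; rewrite /edom /=; move: fj1_ninf fj1_le0; case: (f _).
- move=> fj1_neq0; rewrite ltNge; apply/negP => gj1_ge0; apply: no_stop.
  by rewrite lt_neqAle fj1_le0 andbT; split=> //; apply/eqP.
Qed.

End NewtonDinkelbach.

Theorem lemma3p1 (R : realType) (f : R -> \bar R)
  (hproper : eproper f) (hconc : econcave f)
  (hstart : exists d, [/\ d \in edom f, (f d <= 0)%E &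
                          exists2 s, s \in esubdiff f d & s < 0])
  (hroot : (exists x, f x = 0%E) \/ (exists x, x \in eargmax f))
  (dstar : R) (hdstar_in : dstar \in rootargmax f)
  (hdstar_max : forall x, x \in rootargmax f -> x <= dstar)
  (delta g : nat -> R) (n : nat) (hrun : ND_run f delta g n) :
  forall i : nat, (2 <= i)%N -> (i <= n)%N ->
    [/\ dstar <= delta i /\ delta i < delta i.-1,
        (f (delta i) <= f dstar)%E /\ (f (delta i.-1) < f (delta i))%E,
        g i.-1 <= g i,
        (g i = g i.-1 <->
           [/\ ereal_inf [set (s%:E)%E | s in esubdiff f (delta i)] = ((g i)%:E)%E,
               ereal_sup [set (s%:E)%E | s in esubdiff f (delta i.-1)] = ((g i.-1)%:E)%E &
               f (delta i) = 0%E]) &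
        fine (f (delta i)) / fine (f (delta i.-1)) + g i / g i.-1 <= 1].
Proof.
case=> [|j] //= j_gt0 jn.
have [da ga_sub fa_le0 ga_lt0] := ND_run_inv (j := j.+1) hrun jn.
have j_range : (0 < j <= n)%N by rewrite -ltnS j_gt0 ltnW.
have [db gb_sub fb_le0 gb_lt0] := ND_run_inv hrun j_range.
have [fb_neq0 step _ _ _] := hrun.2 j j_gt0 jn.
have fa := edom_fineK da; have fb := edom_fineK db.
have Fb_lt0 := edom_fine_lt0 db fb_le0 fb_neq0.
have ga_neg : fine (f (delta j.+1)) != 0 -> g j.+1 < 0.
  by move=> Fa_neq0; apply: ga_lt0 => fa0; rewrite fa0 eqxx in Fa_neq0.
have gb_neg := gb_lt0 fb_neq0.
split.
- split; last exact: (newton_step_lt fb gb_sub Fb_lt0 gb_neg step).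
  exact: (rootargmax_le_newton fb gb_sub Fb_lt0 gb_neg step fa ga_sub ga_neg hdstar_in).
- split; last by rewrite fa fb lte_fin (newton_value_lt fb gb_sub Fb_lt0 gb_neg step fa ga_sub ga_neg).
  by case: (set_mem hdstar_in) => [-> | /(_ (delta j.+1))].
- exact: (newton_slope_le fb gb_sub Fb_lt0 gb_neg step fa ga_sub ga_neg).
- exact: (newton_slope_eq fb gb_sub Fb_lt0 gb_neg step fa ga_sub ga_neg).
- exact: (newton_ratio_le1 fb gb_sub Fb_lt0 gb_neg step fa ga_sub ga_neg).
Qed.
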